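(* Let $(T,[\cdot,\cdot],[\cdot,\cdot,\cdot],\alpha)$ be a Hom-Lie-Yamaguti algebra, let $0\to\mathfrak{h}\xrightarrow{i}\hat T\xrightarrow{p}T\to0$ be an abelian extension of $T$ by $(\mathfrak{h},\beta)$ (with $\mathfrak{h}$ identified with $i(\mathfrak{h})$), and let $\sigma:T\to\hat T$ be a section. Define $$\nu(x_1,x_2)=[\sigma(x_1),\sigma(x_2)]_{\hat T}-\sigma([x_1,x_2]),\qquad \omega(x_1,x_2,x_3)=[\sigma(x_1),\sigma(x_2),\sigma(x_3)]_{\hat T}-\sigma([x_1,x_2,x_3]).$$ Then $\nu$ and $\omega$ take values in $\mathfrak{h}$, and $(\nu,\omega)$ is a (2,3)-cocycle of $T$ with coefficients in $\mathfrak{h}$ with respect to the representation $(\rho,D,\theta)$ given by $\rho(x_1)(u)=[\sigma(x_1),u]_{\hat T}$, $D(x_1,x_2)(u)=[\sigma(x_1),\sigma(x_2),u]_{\hat T}$, $\theta(x_1,x_2)(u)=[u,\sigma(x_1),\sigma(x_2)]_{\hat T}$.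
   Context: Throughout, vector spaces are over an algebraically closed field $\mathbb{K}$ of characteristic different from 2 and 3. A Hom-Lie-Yamaguti algebra (HLYA) is a vector space $T$ with a linear map $\alpha:T\to T$, a bilinear map $[\cdot,\cdot]$ and a trilinear map $[\cdot,\cdot,\cdot]$ on $T$ such that for all $x_i,y_i\in T$: (HLY01) $\alpha([x_1,x_2])=[\alpha(x_1),\alpha(x_2)]$; (HLY02) $\alpha([x_1,x_2,x_3])=[\alpha(x_1),\alpha(x_2),\alpha(x_3)]$; (HLY1) $[x_1,x_2]+[x_2,x_1]=0$; (HLY2) $[x_1,x_2,x_3]+[x_2,x_1,x_3]=0$; (HLY3) $\sum_{\mathrm{cyc}(x_1,x_2,x_3)}([[x_1,x_2],\alpha(x_3)]+[x_1,x_2,x_3])=0$; (HLY4) $[[x_1,x_2],\alpha(x_3),\alpha(y_1)]+[[x_2,x_3],\alpha(x_1),\alpha(y_1)]+[[x_3,x_1],\alpha(x_2),\alpha(y_1)]=0$; (HLY5) $[\alpha(x_1),\alpha(x_2),[y_1,y_2]]=[[x_1,x_2,y_1],\alpha^2(y_2)]+[\alpha^2(y_1),[x_1,x_2,y_2]]$; (HLY6) $[\alpha^2(x_1),\alpha^2(x_2),[y_1,y_2,y_3]]=[[x_1,x_2,y_1],\alpha^2(y_2),\alpha^2(y_3)]+[\alpha^2(y_1),[x_1,x_2,y_2],\alpha^2(y_3)]+[\alpha^2(y_1),\alpha^2(y_2),[x_1,x_2,y_3]]$. A homomorphism of HLYAs $\varphi:(T,\alpha)\to(T',\alpha')$ is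 a linear map with $\varphi\circ\alpha=\alpha'\circ\varphi$ preserving both brackets. An extension of $(T,\alpha)$ by a HLYA $(\mathfrak{h},\beta)$ is a HLYA $(\hat T,[\cdot,\cdot]_{\hat T},[\cdot,\cdot,\cdot]_{\hat T},\hat\alpha)$ with HLYA homomorphisms $i:\mathfrak{h}\to\hat T$ (injective) and $p:\hat T\to T$ (surjective), $\mathrm{Im}(i)=\mathrm{Ker}(p)$. It is abelian if $[u,v]_{\hat T}=0$ and $[u,v,z]_{\hat T}=[u,z,v]_{\hat T}=[z,u,v]_{\hat T}=0$ for all $u,v\in i(\mathfrak{h})$, $z\in\hat T$. A section is a linear map $\sigma:T\to\hat T$ with $p\circ\sigma=\mathrm{id}_T$ and $\hat\alpha\circ\sigma=\sigma\circ\alpha$. (The maps $\rho,D,\theta$ defined in the claim form a representation of $(T,\alpha)$ on $(\mathfrak{h},\beta)$.) For a representation $(\rho,D,\theta)$ of $(T,\alpha)$ on a Hom-vector space $(V,\beta)$, a (2,3)-cocycle is a pair of a bilinear map $\nu:T\times T\to V$ and a trilinear map $\omega:T^3\to V$ with $\nu(x_1,x_2)=-\nu(x_2,x_1)$, $\omega(x_1,x_2,x_3)=-\omega(x_2,x_1,x_3)$ and, for all $x_i,y_i\in T$: (CC01) $\nu(\alpha(x_1),\alpha(x_2))=\beta(\nu(x_1,x_2))$; (CC02) $\omega(\alpha(x_1),\alpha(x_2),\alpha(x_3))=\beta(\omega(x_1,x_2,x_3))$; (CC1) $\sum_{\mathrm{cyc}(x_1,x_2,x_3)}\big(\omega(x_1,x_2,x_3)-\rho(\alpha(x_1))\nu(x_2,x_3)+\nu([x_1,x_2],\alpha(x_3))\big)=0$;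 (CC2) $\sum_{\mathrm{cyc}(x_1,x_2,x_3)}\big(\theta(\alpha(x_1),\alpha(y_1))\nu(x_2,x_3)+\omega([x_1,x_2],\alpha(x_3),\alpha(y_1))\big)=0$; (CC3) $\omega(\alpha(x_1),\alpha(x_2),[y_1,y_2])+D(\alpha(x_1),\alpha(x_2))\nu(y_1,y_2)=\nu([x_1,x_2,y_1],\alpha^2(y_2))+\nu(\alpha^2(y_1),[x_1,x_2,y_2])+\rho(\alpha^2(y_1))\omega(x_1,x_2,y_2)-\rho(\alpha^2(y_2))\omega(x_1,x_2,y_1)$; (CC4) $\omega(\alpha^2(x_1),\alpha^2(x_2),[y_1,y_2,y_3])+D(\alpha^2(x_1),\alpha^2(x_2))\omega(y_1,y_2,y_3)=\omega([x_1,x_2,y_1],\alpha^2(y_2),\alpha^2(y_3))+\omega(\alpha^2(y_1),[x_1,x_2,y_2],\alpha^2(y_3))+\omega(\alpha^2(y_1),\alpha^2(y_2),[x_1,x_2,y_3])+\theta(\alpha^2(y_2),\alpha^2(y_3))\omega(x_1,x_2,y_1)-\theta(\alpha^2(y_1),\alpha^2(y_3))\omega(x_1,x_2,y_2)+D(\alpha^2(y_1),\alpha^2(y_2))\omega(x_1,x_2,y_3)$. *)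

From HB Require Import structures.
From mathcomp Require Import all_boot all_order all_algebra.
Set Implicit Arguments. Unset Strict Implicit. Unset Printing Implicit Defensive.
Import GRing.Theory.
Local Open Scope ring_scope.

Section HLY.
Variable K : fieldType.

Definition lin_map (U V : lmodType K) (f : U -> V) : Prop :=
  forall (a : K) (x y : U), f (a *: x + y) = a *: f x + f y.

Definition bilin (U V : lmodType K) (f : U -> U -> V) : Prop :=
  (forall y, lin_map (fun x => f x y)) /\ (forall x, lin_map (f x)).

Definition trilin (U V : lmodType K) (f : U -> U -> U -> V) : Prop :=
  (forall y z, lin_map (fun x => f x y z)) /\
  (forall x z, lin_map (fun y => f x y z)) /\
  (forall x y, lin_map (f x y)).

Definition HLYA (T : lmodType K) (br : T -> T -> T) (tr : T -> T -> T -> T)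
  (al : T -> T) : Prop :=
  lin_map al /\ bilin br /\ trilin tr /\
   (forall x1 x2, al (br x1 x2) = br (al x1) (al x2)) /\
   (forall x1 x2 x3, al (tr x1 x2 x3) = tr (al x1) (al x2) (al x3)) /\
   (forall x1 x2, br x1 x2 + br x2 x1 = 0) /\
   (forall x1 x2 x3, tr x1 x2 x3 + tr x2 x1 x3 = 0) /\
   (forall x1 x2 x3,
       (br (br x1 x2) (al x3) + tr x1 x2 x3)
     + (br (br x2 x3) (al x1) + tr x2 x3 x1)
     + (br (br x3 x1) (al x2) + tr x3 x1 x2) = 0) /\
   (forall x1 x2 x3 y1,
       tr (br x1 x2) (al x3) (al y1) + tr (br x2 x3) (al x1) (al y1)
     + tr (br x3 x1) (al x2) (al y1) = 0) /\
   (forall x1 x2 y1 y2,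
       tr (al x1) (al x2) (br y1 y2)
     = br (tr x1 x2 y1) (al (al y2)) + br (al (al y1)) (tr x1 x2 y2)) /\
   (forall x1 x2 y1 y2 y3,
       tr (al (al x1)) (al (al x2)) (tr y1 y2 y3)
     = tr (tr x1 x2 y1) (al (al y2)) (al (al y3))
     + tr (al (al y1)) (tr x1 x2 y2) (al (al y3))
     + tr (al (al y1)) (al (al y2)) (tr x1 x2 y3)).

Definition HLYA_hom (T T' : lmodType K)
  (br : T -> T -> T) (tr : T -> T -> T -> T) (al : T -> T)
  (br' : T' -> T' -> T') (tr' : T' -> T' -> T' -> T') (al' : T' -> T')
  (phi : T -> T') : Prop :=
  [/\ lin_map phi,
      (forall x, phi (al x) = al' (phi x)),
      (forall x1 x2, phi (br x1 x2) = br' (phi x1) (phi x2)) &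
      (forall x1 x2 x3, phi (tr x1 x2 x3) = tr' (phi x1) (phi x2) (phi x3))].

Definition HLYA_extension (T H Th : lmodType K)
  (br : T -> T -> T) (tr : T -> T -> T -> T) (al : T -> T)
  (brh : H -> H -> H) (trh : H -> H -> H -> H) (be : H -> H)
  (brt : Th -> Th -> Th) (trt : Th -> Th -> Th -> Th) (alt : Th -> Th)
  (i : H -> Th) (p : Th -> T) : Prop :=
  HLYA brh trh be /\ HLYA brt trt alt /\
  HLYA_hom brh trh be brt trt alt i /\
  HLYA_hom brt trt alt br tr al p /\
  injective i /\
  (forall x : T, exists y : Th, p y = x) /\
  (forall y : Th, (exists u : H, i u = y) <-> p y = 0).

Definition abelian_ext (H Th : lmodType K)
  (brt : Th -> Th -> Th) (trt : Th -> Th -> Th -> Th) (i : H -> Th) : Prop :=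
  (forall u v : H, brt (i u) (i v) = 0) /\
  (forall (u v : H) (z : Th),
     [/\ trt (i u) (i v) z = 0, trt (i u) z (i v) = 0 & trt z (i u) (i v) = 0]).

Definition ext_section (T Th : lmodType K) (al : T -> T) (alt : Th -> Th)
  (p : Th -> T) (sigma : T -> Th) : Prop :=
  [/\ lin_map sigma, (forall x, p (sigma x) = x) &
      (forall x, alt (sigma x) = sigma (al x))].

Definition cocycle23 (T V : lmodType K)
  (br : T -> T -> T) (tr : T -> T -> T -> T) (al : T -> T) (be : V -> V)
  (rho : T -> V -> V) (D theta : T -> T -> V -> V)
  (nu : T -> T -> V) (om : T -> T -> T -> V) : Prop :=
  bilin nu /\ trilin om /\
      (forall x1 x2, nu x1 x2 = - nu x2 x1) /\
      (forall x1 x2 x3, om x1 x2 x3 = - om x2 x1 x3) /\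
      (forall x1 x2, nu (al x1) (al x2) = be (nu x1 x2)) /\
      (forall x1 x2 x3, om (al x1) (al x2) (al x3) = be (om x1 x2 x3)) /\
      (forall x1 x2 x3,
         (om x1 x2 x3 - rho (al x1) (nu x2 x3) + nu (br x1 x2) (al x3))
       + (om x2 x3 x1 - rho (al x2) (nu x3 x1) + nu (br x2 x3) (al x1))
       + (om x3 x1 x2 - rho (al x3) (nu x1 x2) + nu (br x3 x1) (al x2)) = 0) /\
       (forall x1 x2 x3 y1,
         (theta (al x1) (al y1) (nu x2 x3) + om (br x1 x2) (al x3) (al y1))
       + (theta (al x2) (al y1) (nu x3 x1) + om (br x2 x3) (al x1) (al y1))
       + (theta (al x3) (al y1) (nu x1 x2) + om (br x3 x1) (al x2) (al y1)) = 0) /\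
       (forall x1 x2 y1 y2,
         om (al x1) (al x2) (br y1 y2) + D (al x1) (al x2) (nu y1 y2)
       = nu (tr x1 x2 y1) (al (al y2)) + nu (al (al y1)) (tr x1 x2 y2)
       + rho (al (al y1)) (om x1 x2 y2) - rho (al (al y2)) (om x1 x2 y1)) /\
       (forall x1 x2 y1 y2 y3,
         om (al (al x1)) (al (al x2)) (tr y1 y2 y3)
       + D (al (al x1)) (al (al x2)) (om y1 y2 y3)
       = om (tr x1 x2 y1) (al (al y2)) (al (al y3))
       + om (al (al y1)) (tr x1 x2 y2) (al (al y3))
       + om (al (al y1)) (al (al y2)) (tr x1 x2 y3)
       + theta (al (al y2)) (al (al y3)) (om x1 x2 y1)
       - theta (al (al y1)) (al (al y3)) (om x1 x2 y2)
       + D (al (al y1)) (al (al y2)) (om x1 x2 y3)).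

End HLY.

From HB Require Import structures.
From mathcomp Require Import all_boot all_order all_algebra.
Import GRing.Theory.
Local Open Scope ring_scope.

(** Let [nu] and [om] measure how far the section [sigma] is from preserving
    the brackets, so that [[sigma x, sigma y] = sigma [x, y] + nu x y] and
    similarly for the ternary bracket.  Evaluating each defining identity
    (HLY1)-(HLY6) of the extension on [sigma x1, sigma x2, ...], expanding with
    these formulas and subtracting [sigma] applied to the same identity in [T]
    leaves exactly the corresponding cocycle identity, with [rho], [D], [theta]
    read as brackets with [sigma x].  All these identities hold in the big
    algebra; since [p] kills the defects and [i] is an injective morphism
    commuting with the twists, they descend to the kernel. *)

Inductive zexpr := ZVar of nat | ZAdd of zexpr & zexpr | ZOpp of zexpr | ZZero.

Fixpoint zcoef (e : zexpr) (k : nat) : int :=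
  match e with
  | ZVar n => (n == k)%:Z
  | ZAdd e1 e2 => zcoef e1 k + zcoef e2 k
  | ZOpp e1 => - zcoef e1 k
  | ZZero => 0
  end.

Section ZmoduleExpressions.
Context {V : zmodType}.

Fixpoint zeval (env : seq V) (e : zexpr) : V :=
  match e with
  | ZVar n => env`_n
  | ZAdd e1 e2 => zeval env e1 + zeval env e2
  | ZOpp e1 => - zeval env e1
  | ZZero => 0
  end.

Lemma zeval_coef env e :
  zeval env e = \sum_(k < size env) env`_k *~ zcoef e k.
Proof.
elim: e => [n|e1 IH1 e2 IH2|e1 IH1|] /=.
- have [lt_n|ge_n] := ltnP n (size env); last first.
    rewrite nth_default // big1 // => k _.
    by rewrite gtn_eqF ?mulr0z // (leq_trans (ltn_ord k)).
  rewrite (bigD1 (Ordinal lt_n)) //= eqxx mulr1z big1 ?addr0 // => k nk.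
  suff /negbTE -> : n != k by rewrite mulr0z.
  by apply: contraNneq nk => nk; apply/eqP/val_inj.
- by rewrite IH1 IH2 -big_split; apply: eq_bigr => k _; rewrite mulrzDr.
- by rewrite IH1 -sumrN; apply: eq_bigr => k _; rewrite mulrNz.
- by rewrite big1 // => k _; rewrite mulr0z.
Qed.

Lemma zeval_eq_coef env e1 e2 n : size env = n ->
  all (fun k => zcoef e1 k == zcoef e2 k) (iota 0 n) ->
  zeval env e1 = zeval env e2.
Proof.
move=> <- /allP same; rewrite !zeval_coef; apply: eq_bigr => k _.
by rewrite (eqP (same k _)) // mem_iota add0n ltn_ord.
Qed.

Lemma eq_add_fact {L R a b : V} : a = b -> L = R + (a - b) -> L = R.
Proof. by move=> -> ->; rewrite subrr addr0. Qed.

End ZmoduleExpressions.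

Ltac zmodule_index t env :=
  lazymatch env with
  | @nil _ => constr:(@None nat)
  | @cons _ t _ => constr:(Some 0%N)
  | @cons _ _ ?r =>
      let o := zmodule_index t r in
      lazymatch o with
      | Some ?n => constr:(Some n.+1)
      | None => constr:(@None nat)
      end
  end.

Ltac zmodule_reify env t :=
  lazymatch t with
  | (?a + ?b)%R =>
      let ra := zmodule_reify env a in
      lazymatch ra with (?ea, ?env1) =>
      let rb := zmodule_reify env1 b in
      lazymatch rb with (?eb, ?env2) => constr:((ZAdd ea eb, env2)) end end
  | (- ?a)%R =>
      let ra := zmodule_reify env a in
      lazymatch ra with (?ea, ?env1) => constr:((ZOpp ea, env1)) end
  | 0%R => constr:((ZZero, env))
  | _ =>
      let o := zmodule_index t env in
      lazymatch o with
      | Some ?n => constr:((ZVar n, env))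
      | None =>
          let env' := eval cbv [rcons] in (rcons env t) in
          constr:((ZVar (size env), env'))
      end
  end.

Ltac zmodule_normalize :=
  lazymatch goal with |- @eq ?V ?l ?r =>
    let rl := zmodule_reify (@nil V) l in
    lazymatch rl with (?el, ?env1) =>
    let rr := zmodule_reify env1 r in
    lazymatch rr with (?er, ?env) =>
      change (zeval env el = zeval env er);
      apply: (@zeval_eq_coef V env el er (size env) erefl);
      vm_compute; reflexivity
  end end end.

(* Closes an identity in a Z-module after consuming every hypothesis [a = b]
   of the same type, each of which is added as [a - b] to the right-hand side. *)
Ltac zmodule_eq :=
  lazymatch goal with
  | h : @eq ?V _ _ |- @eq ?V _ _ =>
      apply: (eq_add_fact h); clear h; zmodule_eq
  | |- _ => zmodule_normalize
  end.

Section LinearMaps.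
Context {K : fieldType} {U V W : lmodType K}.

Definition linear_of_lin_map {f : U -> V} (hf : lin_map f) : {linear U -> V} :=
  HB.pack f (GRing.isLinear.Build K U V _ f hf).

Lemma lin_mapD {f : U -> V} : lin_map f -> {morph f : x y / x + y}.
Proof. move=> hf; exact: raddfD (linear_of_lin_map hf). Qed.

Lemma lin_mapN {f : U -> V} : lin_map f -> {morph f : x / - x}.
Proof. move=> hf; exact: raddfN (linear_of_lin_map hf). Qed.

Lemma lin_mapB {f : U -> V} : lin_map f -> {morph f : x y / x - y}.
Proof. move=> hf; exact: raddfB (linear_of_lin_map hf). Qed.

Lemma lin_map0 {f : U -> V} : lin_map f -> f 0 = 0.
Proof. move=> hf; exact: raddf0 (linear_of_lin_map hf). Qed.

Lemma lin_map_sub {f g : U -> V} :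
  lin_map f -> lin_map g -> lin_map (fun x => f x - g x).
Proof. by move=> hf hg a x y; rewrite hf hg scalerBr opprD addrACA. Qed.

Lemma lin_map_comp {f : V -> W} {g : U -> V} :
  lin_map f -> lin_map g -> lin_map (fun x => f (g x)).
Proof. by move=> hf hg a x y; rewrite hg hf. Qed.

Lemma lin_map_cancel {j : V -> W} {g : U -> V} {h : U -> W} :
  lin_map j -> injective j -> (forall x, j (g x) = h x) -> lin_map h -> lin_map g.
Proof. by move=> hj j_inj jg hh a x y; apply: j_inj; rewrite hj !jg hh. Qed.

End LinearMaps.

Section Defect.
Variables (K : fieldType) (T Th : lmodType K).
Variables (br : T -> T -> T) (tr : T -> T -> T -> T) (al : T -> T).
Variables (brt : Th -> Th -> Th) (trt : Th -> Th -> Th -> Th) (alt : Th -> Th).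
Variable sigma : T -> Th.
Hypotheses (HT : HLYA br tr al) (HTh : HLYA brt trt alt).
Hypotheses (sigma_lin : lin_map sigma)
  (alt_sigma : forall x, alt (sigma x) = sigma (al x)).

Let br_bil := HT.2.1.
Let tr_tril := HT.2.2.1.
Let al_br := HT.2.2.2.1.
Let al_tr := HT.2.2.2.2.1.
Let br_skew := HT.2.2.2.2.2.1.
Let tr_skew := HT.2.2.2.2.2.2.1.
Let hly3 := HT.2.2.2.2.2.2.2.1.
Let hly4 := HT.2.2.2.2.2.2.2.2.1.
Let hly5 := HT.2.2.2.2.2.2.2.2.2.1.
Let hly6 := HT.2.2.2.2.2.2.2.2.2.2.
Let alt_lin := HTh.1.
Let brt_bil := HTh.2.1.
Let trt_tril := HTh.2.2.1.
Let alt_brt := HTh.2.2.2.1.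
Let alt_trt := HTh.2.2.2.2.1.
Let brt_skew := HTh.2.2.2.2.2.1.
Let trt_skew := HTh.2.2.2.2.2.2.1.
Let hly3_Th := HTh.2.2.2.2.2.2.2.1.
Let hly4_Th := HTh.2.2.2.2.2.2.2.2.1.
Let hly5_Th := HTh.2.2.2.2.2.2.2.2.2.1.
Let hly6_Th := HTh.2.2.2.2.2.2.2.2.2.2.

Let brt_anti a b : brt a b = - brt b a.
Proof. by apply/eqP; rewrite -addr_eq0 brt_skew. Qed.

Let trt_anti a b c : trt a b c = - trt b a c.
Proof. by apply/eqP; rewrite -addr_eq0 trt_skew. Qed.

Definition bracket_defect x1 x2 := brt (sigma x1) (sigma x2) - sigma (br x1 x2).

Definition triple_defect x1 x2 x3 :=
  trt (sigma x1) (sigma x2) (sigma x3) - sigma (tr x1 x2 x3).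

Lemma bracket_defect_bilin : bilin bracket_defect.
Proof.
split=> [y|x]; apply: lin_map_sub.
- exact: lin_map_comp (brt_bil.1 _) sigma_lin.
- exact: lin_map_comp sigma_lin (br_bil.1 _).
- exact: lin_map_comp (brt_bil.2 _) sigma_lin.
- exact: lin_map_comp sigma_lin (br_bil.2 _).
Qed.

Lemma triple_defect_trilin : trilin triple_defect.
Proof.
split; [|split]=> [y z|x z|x y]; apply: lin_map_sub.
- exact: lin_map_comp (trt_tril.1 _ _) sigma_lin.
- exact: lin_map_comp sigma_lin (tr_tril.1 _ _).
- exact: lin_map_comp (trt_tril.2.1 _ _) sigma_lin.
- exact: lin_map_comp sigma_lin (tr_tril.2.1 _ _).
- exact: lin_map_comp (trt_tril.2.2 _ _) sigma_lin.
- exact: lin_map_comp sigma_lin (tr_tril.2.2 _ _).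
Qed.

Lemma bracket_defect_skew x1 x2 :
  bracket_defect x1 x2 = - bracket_defect x2 x1.
Proof.
have skew_Th := brt_skew (sigma x1) (sigma x2).
have skew_T := esym (congr1 sigma (br_skew x1 x2)).
rewrite (lin_mapD sigma_lin) (lin_map0 sigma_lin) in skew_T.
rewrite /bracket_defect; zmodule_eq.
Qed.

Lemma triple_defect_skew x1 x2 x3 :
  triple_defect x1 x2 x3 = - triple_defect x2 x1 x3.
Proof.
have skew_Th := trt_skew (sigma x1) (sigma x2) (sigma x3).
have skew_T := esym (congr1 sigma (tr_skew x1 x2 x3)).
rewrite (lin_mapD sigma_lin) (lin_map0 sigma_lin) in skew_T.
rewrite /triple_defect; zmodule_eq.
Qed.

Lemma bracket_defect_al x1 x2 :
  bracket_defect (al x1) (al x2) = alt (bracket_defect x1 x2).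
Proof. by rewrite /bracket_defect (lin_mapB alt_lin) alt_brt !alt_sigma al_br. Qed.

Lemma triple_defect_al x1 x2 x3 :
  triple_defect (al x1) (al x2) (al x3) = alt (triple_defect x1 x2 x3).
Proof. by rewrite /triple_defect (lin_mapB alt_lin) alt_trt !alt_sigma al_tr. Qed.

Lemma defect_cc1 x1 x2 x3 :
    (triple_defect x1 x2 x3 - brt (sigma (al x1)) (bracket_defect x2 x3)
       + bracket_defect (br x1 x2) (al x3))
  + (triple_defect x2 x3 x1 - brt (sigma (al x2)) (bracket_defect x3 x1)
       + bracket_defect (br x2 x3) (al x1))
  + (triple_defect x3 x1 x2 - brt (sigma (al x3)) (bracket_defect x1 x2)
       + bracket_defect (br x3 x1) (al x2)) = 0.
Proof.
have hTh := hly3_Th (sigma x1) (sigma x2) (sigma x3); rewrite !alt_sigma in hTh.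
have hT := esym (congr1 sigma (hly3 x1 x2 x3)).
rewrite !(lin_mapD sigma_lin) (lin_map0 sigma_lin) in hT.
rewrite /bracket_defect /triple_defect !(lin_mapB (brt_bil.2 _)).
rewrite !(brt_anti (sigma (al _))).
zmodule_eq.
Qed.

Lemma defect_cc2 x1 x2 x3 y1 :
    (trt (bracket_defect x2 x3) (sigma (al x1)) (sigma (al y1))
       + triple_defect (br x1 x2) (al x3) (al y1))
  + (trt (bracket_defect x3 x1) (sigma (al x2)) (sigma (al y1))
       + triple_defect (br x2 x3) (al x1) (al y1))
  + (trt (bracket_defect x1 x2) (sigma (al x3)) (sigma (al y1))
       + triple_defect (br x3 x1) (al x2) (al y1)) = 0.
Proof.
have hTh := hly4_Th (sigma x1) (sigma x2) (sigma x3) (sigma y1).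
rewrite !alt_sigma in hTh.
have hT := esym (congr1 sigma (hly4 x1 x2 x3 y1)).
rewrite !(lin_mapD sigma_lin) (lin_map0 sigma_lin) in hT.
rewrite /bracket_defect /triple_defect !(lin_mapB (trt_tril.1 _ _)).
zmodule_eq.
Qed.

Lemma defect_cc3 x1 x2 y1 y2 :
    triple_defect (al x1) (al x2) (br y1 y2)
      + trt (sigma (al x1)) (sigma (al x2)) (bracket_defect y1 y2)
  = bracket_defect (tr x1 x2 y1) (al (al y2))
      + bracket_defect (al (al y1)) (tr x1 x2 y2)
      + brt (sigma (al (al y1))) (triple_defect x1 x2 y2)
      - brt (sigma (al (al y2))) (triple_defect x1 x2 y1).
Proof.
have hTh := hly5_Th (sigma x1) (sigma x2) (sigma y1) (sigma y2).
rewrite !alt_sigma in hTh.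
have hT := esym (congr1 sigma (hly5 x1 x2 y1 y2)).
rewrite !(lin_mapD sigma_lin) in hT.
rewrite /bracket_defect /triple_defect.
rewrite !(lin_mapB (brt_bil.2 _)) !(lin_mapB (trt_tril.2.2 _ _)).
(* Reverse only the brackets led by [sigma (al (al y2))]; those led by
   [sigma (al (al y1))] already appear as in (HLY5). *)
rewrite !(brt_anti (sigma (al (al y2)))).
zmodule_eq.
Qed.

Lemma defect_cc4 x1 x2 y1 y2 y3 :
    triple_defect (al (al x1)) (al (al x2)) (tr y1 y2 y3)
      + trt (sigma (al (al x1))) (sigma (al (al x2))) (triple_defect y1 y2 y3)
  = triple_defect (tr x1 x2 y1) (al (al y2)) (al (al y3))
      + triple_defect (al (al y1)) (tr x1 x2 y2) (al (al y3))
      + triple_defect (al (al y1)) (al (al y2)) (tr x1 x2 y3)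
      + trt (triple_defect x1 x2 y1) (sigma (al (al y2))) (sigma (al (al y3)))
      - trt (triple_defect x1 x2 y2) (sigma (al (al y1))) (sigma (al (al y3)))
      + trt (sigma (al (al y1))) (sigma (al (al y2))) (triple_defect x1 x2 y3).
Proof.
have hTh := hly6_Th (sigma x1) (sigma x2) (sigma y1) (sigma y2) (sigma y3).
rewrite !alt_sigma in hTh.
have hT := esym (congr1 sigma (hly6 x1 x2 y1 y2 y3)).
rewrite !(lin_mapD sigma_lin) in hT.
rewrite /triple_defect !(lin_mapB (trt_tril.1 _ _)) !(lin_mapB (trt_tril.2.2 _ _)).
rewrite !(trt_anti _ (sigma (al (al y1)))).
zmodule_eq.
Qed.

Lemma defect_cocycle23 :
  cocycle23 br tr al alt (fun x => brt (sigma x)) (fun x y => trt (sigma x) (sigma y))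
    (fun x y v => trt v (sigma x) (sigma y)) bracket_defect triple_defect.
Proof.
split; first exact: bracket_defect_bilin.
split; first exact: triple_defect_trilin.
split; first exact: bracket_defect_skew.
split; first exact: triple_defect_skew.
split; first exact: bracket_defect_al.
split; first exact: triple_defect_al.
split; first exact: defect_cc1.
split; first exact: defect_cc2.
split; first exact: defect_cc3.
exact: defect_cc4.
Qed.

End Defect.

Arguments defect_cocycle23 {K T Th br tr al brt trt alt sigma}.

Section Pullback.
Context {K : fieldType} {T V W : lmodType K}.
Context {br : T -> T -> T} {tr : T -> T -> T -> T} {al : T -> T}.
Context {be : V -> V} {rho : T -> V -> V} {D theta : T -> T -> V -> V}.
Context {nu : T -> T -> V} {om : T -> T -> T -> V}.
Context {be' : W -> W} {rho' : T -> W -> W} {D' theta' : T -> T -> W -> W}.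
Context {nu' : T -> T -> W} {om' : T -> T -> T -> W}.
Context {j : V -> W}.
Hypotheses (j_lin : lin_map j) (j_inj : injective j).
Hypotheses (j_be : forall v, j (be v) = be' (j v))
  (j_rho : forall x v, j (rho x v) = rho' x (j v))
  (j_D : forall x y v, j (D x y v) = D' x y (j v))
  (j_theta : forall x y v, j (theta x y v) = theta' x y (j v))
  (j_nu : forall x y, j (nu x y) = nu' x y)
  (j_om : forall x y z, j (om x y z) = om' x y z).

Let j_pushE := (lin_mapD j_lin, lin_mapN j_lin, lin_map0 j_lin,
  j_be, j_rho, j_D, j_theta, j_nu, j_om).

Lemma cocycle23_pullback :
  cocycle23 br tr al be' rho' D' theta' nu' om' ->
  cocycle23 br tr al be rho D theta nu om.
Proof.
move=> [[nu'_l nu'_r] [[om'_1 [om'_2 om'_3]]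
  [nu'_skew [om'_skew [nu'_al [om'_al [cc1 [cc2 [cc3 cc4]]]]]]]]].
split; [|split].
- split=> [y|x].
  + exact: lin_map_cancel j_lin j_inj (fun x => j_nu x y) (nu'_l y).
  + exact: lin_map_cancel j_lin j_inj (j_nu x) (nu'_r x).
- split; [|split] => [y z|x z|x y].
  + exact: lin_map_cancel j_lin j_inj (fun x => j_om x y z) (om'_1 y z).
  + exact: lin_map_cancel j_lin j_inj (fun y => j_om x y z) (om'_2 x z).
  + exact: lin_map_cancel j_lin j_inj (j_om x y) (om'_3 x y).
- by do !split=> *; apply: j_inj; rewrite !j_pushE; auto.
Qed.

End Pullback.

Section KernelFactorization.
Context {K : fieldType} {H Th T : lmodType K} {i : H -> Th} {p : Th -> T}.
Hypothesis ker_p : forall y, (exists u, i u = y) <-> p y = 0.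

Lemma factor_through_kernel {A : Type} (f : A -> Th) :
  (forall a, p (f a) = 0) -> {g : A -> H | forall a, i (g a) = f a}.
Proof.
move=> pf0.
have im_f a : exists u, i u == f a by have [u <-] := (ker_p (f a)).2 (pf0 a); exists u.
by exists (fun a => xchoose (im_f a)) => a; apply/eqP/(xchooseP (im_f a)).
Qed.

Lemma factor_through_kernel2 {A B : Type} (f : A -> B -> Th) :
  (forall a b, p (f a b) = 0) -> {g : A -> B -> H | forall a b, i (g a b) = f a b}.
Proof.
move=> pf0.
have [g ig] := factor_through_kernel (fun ab : A * B => f ab.1 ab.2)
  (fun ab => pf0 ab.1 ab.2).
by exists (fun a b => g (a, b)) => a b; rewrite ig.
Qed.

Lemma factor_through_kernel3 {A B C : Type} (f : A -> B -> C -> Th) :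
  (forall a b c, p (f a b c) = 0) ->
  {g : A -> B -> C -> H | forall a b c, i (g a b c) = f a b c}.
Proof.
move=> pf0.
have [g ig] := factor_through_kernel (fun abc : A * B * C => f abc.1.1 abc.1.2 abc.2)
  (fun abc => pf0 abc.1.1 abc.1.2 abc.2).
by exists (fun a b c => g (a, b, c)) => a b c; rewrite ig.
Qed.

End KernelFactorization.

Theorem lemma4p4 (K : closedFieldType)
  (hK2 : 2%N \notin [pchar K]) (hK3 : 3%N \notin [pchar K])
  (T H Th : lmodType K)
  (br : T -> T -> T) (tr : T -> T -> T -> T) (al : T -> T)
  (brh : H -> H -> H) (trh : H -> H -> H -> H) (be : H -> H)
  (brt : Th -> Th -> Th) (trt : Th -> Th -> Th -> Th) (alt : Th -> Th)
  (i : H -> Th) (p : Th -> T) (sigma : T -> Th) :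
  HLYA br tr al ->
  HLYA_extension br tr al brh trh be brt trt alt i p ->
  abelian_ext brt trt i ->
  ext_section al alt p sigma ->
  let nu := fun x1 x2 => brt (sigma x1) (sigma x2) - sigma (br x1 x2) in
  let om := fun x1 x2 x3 =>
    trt (sigma x1) (sigma x2) (sigma x3) - sigma (tr x1 x2 x3) in
  exists (nuh : T -> T -> H) (omh : T -> T -> T -> H)
         (rho : T -> H -> H) (D theta : T -> T -> H -> H),
    (forall x1 x2, i (nuh x1 x2) = nu x1 x2) /\
    (forall x1 x2 x3, i (omh x1 x2 x3) = om x1 x2 x3) /\
    (forall x1 u, i (rho x1 u) = brt (sigma x1) (i u)) /\
    (forall x1 x2 u, i (D x1 x2 u) = trt (sigma x1) (sigma x2) (i u)) /\
    (forall x1 x2 u, i (theta x1 x2 u) = trt (i u) (sigma x1) (sigma x2)) /\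
    cocycle23 br tr al be rho D theta nuh omh.
Proof.
move=> HT [_ [HTh [[i_lin i_be _ _] [[p_lin _ p_br p_tr] [i_inj [_ ker_p]]]]]] _.
move=> [sigma_lin p_sigma alt_sigma] nu om.
have [_ [br_bil [tr_tril _]]] := HT.
have p_i u : p (i u) = 0 by apply/ker_p; exists u.
have /(factor_through_kernel2 ker_p)[nuh i_nuh] : forall x1 x2, p (nu x1 x2) = 0.
  by move=> x1 x2; rewrite /nu (lin_mapB p_lin) p_br !p_sigma subrr.
have /(factor_through_kernel3 ker_p)[omh i_omh] :
    forall x1 x2 x3, p (om x1 x2 x3) = 0.
  by move=> x1 x2 x3; rewrite /om (lin_mapB p_lin) p_tr !p_sigma subrr.
have /(factor_through_kernel2 ker_p)[rho i_rho] :
    forall x u, p (brt (sigma x) (i u)) = 0.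
  by move=> x u; rewrite p_br p_i (lin_map0 (br_bil.2 _)).
have /(factor_through_kernel3 ker_p)[D i_D] :
    forall x1 x2 u, p (trt (sigma x1) (sigma x2) (i u)) = 0.
  by move=> x1 x2 u; rewrite p_tr p_i (lin_map0 (tr_tril.2.2 _ _)).
have /(factor_through_kernel3 ker_p)[theta i_theta] :
    forall x1 x2 u, p (trt (i u) (sigma x1) (sigma x2)) = 0.
  by move=> x1 x2 u; rewrite p_tr p_i (lin_map0 (tr_tril.1 _ _)).
exists nuh, omh, rho, D, theta; do 5 (split; first done).
exact: cocycle23_pullback i_lin i_inj i_be i_rho i_D i_theta i_nuh i_omh
  (defect_cocycle23 HT HTh sigma_lin alt_sigma).
Qed.
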